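(* Let $n\ge 2$ be an integer. The Heyting algebra $\mathbb{X}_n^{\ast}$ is infinite and $(n+1)$-generated. Consequently, the variety $\mathbb{V}(\mathbb{X}_n^\ast)$ generated by $\mathbb{X}_n^\ast$ is not locally finite.
   Context: $\mathbb{N}=\{0,1,2,\dots\}$. Fix an integer $n\ge 2$ and put $N=2^{n+1}-1$. Let $T_n$ be the set of triples $\langle k_1,k_2,k_3\rangle$ of pairwise distinct natural numbers $\le N$, with a fixed enumeration $T_n=\{s_0,\dots,s_t\}$. Let $U_n$ be a set of pairwise distinct elements $a_m,b_m$ ($m\in\mathbb{N}$) and $c_{m,k},d_{m,k},e^a_{m,k},e^b_{m,k}$ ($m\in\mathbb{N}$, $0\le k\le N$). Define $x\prec y$ on $U_n$ iff one of: (1) $x=a_m$ and $y\in\{c_{m,k_1},c_{m,k_2}\}$, where $s_j=\langle k_1,k_2,k_3\rangle$ with $j\equiv m \bmod (t+1)$; (2) $x=b_m$ and $y\in\{c_{m,k_1},c_{m,k_3}\}$, with $s_j$ as in (1); (3) $m\ge1$, $x=c_{m,k}$, and either $y=e^a_{m-1,j}$ with $j\ne k$, or $y=e^b_{m-1,i}$ for any $i\le N$; (4) $x=d_{m,k}$ and $y=c_{m,j}$ with $j\neq k$; (5) $x=e^a_{m,k}$ and either $y=a_m$ or $y=d_{m,j}$ with $j\ne k$; (6) $x=e^b_{m,k}$ and either $y=b_m$ or $y=d_{m,j}$ with $j\ne k$. Let $\le$ be the reflexive transitive closure of $\prec$. The $n$-abomination $\mathbb{X}_n$ is the poset $U_n\cup\{\bot\}$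 where $\bot$ is a new least element, with the topology in which $U$ is open iff $\bot\notin U$ or $U$ is cofinite; it is an Esakia space. $\mathbb{X}_n^\ast$ denotes its Esakia dual, the Heyting algebra of clopen upsets of $\mathbb{X}_n$ (with intersection, union, $0=\emptyset$, $1=X_n$, and $U\to V = X_n\setminus{\downarrow}(U\setminus V)$). A variety is locally finite if its finitely generated members are finite. *)

From Stdlib Require Import List Relation_Operators.
From mathcomp Require Import all_boot.

Set Implicit Arguments.
Unset Strict Implicit.
Unset Printing Implicit Defensive.

(* The n-abomination X_n.  Throughout, N = 2^(n+1) - 1, so the indices  *)
(* k with 0 <= k <= N are the ordinals of 'I_N.+1.       *)

Definition idx (n : nat) := 'I_(2 ^ n.+1).-1.+1.

Definition triple (n : nat) := (idx n * idx n * idx n)%type.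

Definition in_Tn (n : nat) (x : triple n) : bool :=
  let: (k1, k2, k3) := x in [&& k1 != k2, k1 != k3 & k2 != k3].

(* An enumeration s_0, ..., s_t of T_n is a duplicate-free list [e] whose
   elements are exactly the members of T_n (so t + 1 = size e). *)
Definition enumeration_of_Tn (n : nat) (e : seq (triple n)) : Prop :=
  uniq e /\ forall x : triple n, (x \in e) = in_Tn x.

Definition s_of (n : nat) (e : seq (triple n)) (m : nat) : triple n :=
  nth (ord0, ord0, ord0) e (m %% size e).
Definition k1_of n (e : seq (triple n)) (m : nat) : idx n := (s_of e m).1.1.
Definition k2_of n (e : seq (triple n)) (m : nat) : idx n := (s_of e m).1.2.
Definition k3_of n (e : seq (triple n)) (m : nat) : idx n := (s_of e m).2.

(* Points of X_n = U_n ∪ {⊥}. *)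
Inductive pt (n : nat) : Type :=
| Pbot
| Pa  (m : nat)
| Pb  (m : nat)
| Pc  (m : nat) (k : idx n)
| Pd  (m : nat) (k : idx n)
| Pea (m : nat) (k : idx n)
| Peb (m : nat) (k : idx n).
Arguments Pbot {n}.

Inductive prec (n : nat) (e : seq (triple n)) : pt n -> pt n -> Prop :=
| prec1 m k : k = k1_of e m \/ k = k2_of e m -> prec e (Pa n m) (Pc m k)
| prec2 m k : k = k1_of e m \/ k = k3_of e m -> prec e (Pb n m) (Pc m k)
| prec3a m k j : j != k -> prec e (Pc m.+1 k) (Pea m j)
| prec3b m k i : prec e (Pc m.+1 k) (Peb m i)
| prec4 m k j : j != k -> prec e (Pd m k) (Pc m j)
| prec5a m k : prec e (Pea m k) (Pa n m)
| prec5b m k j : j != k -> prec e (Pea m k) (Pd m j)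
| prec6a m k : prec e (Peb m k) (Pb n m)
| prec6b m k j : j != k -> prec e (Peb m k) (Pd m j).

Definition le (n : nat) (e : seq (triple n)) (x y : pt n) : Prop :=
  x = Pbot \/ clos_refl_trans (pt n) (@prec n e) x y.

Definition pset (n : nat) := pt n -> Prop.
Definition set_eq n (S T : pset n) : Prop := forall x, S x <-> T x.

Definition cofinite n (S : pset n) : Prop :=
  exists l : list (pt n), forall x, ~ S x -> In x l.
Definition is_open n (S : pset n) : Prop := ~ S Pbot \/ cofinite S.
Definition is_clopen n (S : pset n) : Prop :=
  is_open S /\ is_open (fun x => ~ S x).
Definition is_upset n (e : seq (triple n)) (S : pset n) : Prop :=
  forall x y, le e x y -> S x -> S y.

(* Elements of the Esakia dual X_n^dual: clopen upsets. *)
Definition clopen_upset n (e : seq (triple n)) (S : pset n) : Prop :=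
  is_clopen S /\ is_upset e S.

Definition botS n : pset n := fun _ => False.
Definition topS n : pset n := fun _ => True.
Definition meetS n (S T : pset n) : pset n := fun x => S x /\ T x.
Definition joinS n (S T : pset n) : pset n := fun x => S x \/ T x.
Definition impS n (e : seq (triple n)) (S T : pset n) : pset n :=
  fun x => ~ exists y, le e x y /\ S y /\ ~ T y.

Definition dual_infinite n (e : seq (triple n)) : Prop :=
  ~ exists l : list (pset n),
      forall S, clopen_upset e S -> exists S', In S' l /\ set_eq S S'.

Inductive dual_gen n (e : seq (triple n)) (G : pset n -> Prop) : pset n -> Prop :=
| dg_base S : G S -> dual_gen e G S
| dg_bot : dual_gen e G (@botS n)
| dg_top : dual_gen e G (@topS n)
| dg_meet S T : dual_gen e G S -> dual_gen e G T -> dual_gen e G (meetS S T)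
| dg_join S T : dual_gen e G S -> dual_gen e G T -> dual_gen e G (joinS S T)
| dg_imp S T : dual_gen e G S -> dual_gen e G T -> dual_gen e G (impS e S T).

Definition dual_k_generated n (e : seq (triple n)) (k : nat) : Prop :=
  exists g : 'I_k -> pset n,
    (forall i, clopen_upset e (g i)) /\
    forall S, clopen_upset e S ->
      exists S', dual_gen e (fun T => exists i, T = g i) S' /\ set_eq S S'.

Record HAlg : Type := {
  hcar : Type;
  hbot : hcar;
  htop : hcar;
  hmeet : hcar -> hcar -> hcar;
  hjoin : hcar -> hcar -> hcar;
  himp : hcar -> hcar -> hcar
}.

Inductive term : Type :=
| tvar (i : nat)
| tbot
| ttop
| tmeet (s t : term)
| tjoin (s t : term)
| timp (s t : term).

Fixpoint heval (B : HAlg) (v : nat -> hcar B) (t : term) : hcar B :=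
  match t with
  | tvar i => v i
  | tbot => hbot B
  | ttop => htop B
  | tmeet s u => hmeet (heval v s) (heval v u)
  | tjoin s u => hjoin (heval v s) (heval v u)
  | timp s u => himp (heval v s) (heval v u)
  end.

Fixpoint deval n (e : seq (triple n)) (v : nat -> pset n) (t : term) : pset n :=
  match t with
  | tvar i => v i
  | tbot => @botS n
  | ttop => @topS n
  | tmeet s u => meetS (deval e v s) (deval e v u)
  | tjoin s u => joinS (deval e v s) (deval e v u)
  | timp s u => impS e (deval e v s) (deval e v u)
  end.

Definition dual_satisfies n (e : seq (triple n)) (s t : term) : Prop :=
  forall v : nat -> pset n, (forall i, clopen_upset e (v i)) ->
    set_eq (deval e v s) (deval e v t).

(* B belongs to V(X_n^dual), i.e. (Birkhoff) B satisfies every identity of X_n^dual. *)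
Definition in_variety_dual n (e : seq (triple n)) (B : HAlg) : Prop :=
  forall s t, dual_satisfies e s t ->
    forall w : nat -> hcar B, heval w s = heval w t.

Inductive hgen (B : HAlg) (G : hcar B -> Prop) : hcar B -> Prop :=
| hg_base x : G x -> hgen G x
| hg_bot : hgen G (hbot B)
| hg_top : hgen G (htop B)
| hg_meet x y : hgen G x -> hgen G y -> hgen G (hmeet x y)
| hg_join x y : hgen G x -> hgen G y -> hgen G (hjoin x y)
| hg_imp x y : hgen G x -> hgen G y -> hgen G (himp x y).

Definition finitely_generated (B : HAlg) : Prop :=
  exists l : list (hcar B), forall x, hgen (fun y => In y l) x.

Definition finite_alg (B : HAlg) : Prop :=
  exists l : list (hcar B), forall x, In x l.

Definition variety_dual_locally_finite n (e : seq (triple n)) : Prop :=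
  forall B : HAlg, in_variety_dual e B -> finitely_generated B -> finite_alg B.

(* Every point x <> ⊥ of X_n has a depth (3m at c_{m,k}; 3m+1 at a_m, b_m, d_{m,k};
   3m+2 at e^a_{m,k}, e^b_{m,k}) which ≺ lowers by one, and x ≤ y as soon as
   depth x >= depth y + 2.  Hence the clopen upsets are X_n and the finite unions of
   principal upsets ↑x, and they are closed under →.
   The N + 1 = 2^(n+1) maximal points c_{0,k} are separated by the n + 1 upsets
   g_i = {c_{0,k} | bit i of k is 1}, so every ↑c_{0,k} is a Boolean combination of
   the g_i.  A point x of positive depth is the only point of its depth with exactly
   its covers; this gives a Heyting term defining ↑x from the ↑y with y of smaller
   depth.  By induction on depth the g_i generate all of X_n^∗, which is infinite
   because the ↑a_m are pairwise distinct.  The subalgebra generated by the g_i is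
   thus an infinite (n+1)-generated member of V(X_n^∗). *)

From Stdlib Require Import List Relation_Operators Operators_Properties FinFun.
From Stdlib Require Import Classical FunctionalExtensionality PropExtensionality ProofIrrelevance.
From mathcomp Require Import all_boot zify.

Set Implicit Arguments.
Unset Strict Implicit.
Unset Printing Implicit Defensive.

Lemma In_enum (T : finType) (x : T) : In x (enum T).
Proof.
have : x \in enum T by rewrite mem_enum.
elim: (enum T) => //= y s IH; rewrite in_cons => /orP[/eqP->|/IH]; by [left | right].
Qed.

Definition bit (i k : nat) : bool := odd (k %/ 2 ^ i).

Lemma bit_inj p a b : a < 2 ^ p -> b < 2 ^ p ->
  (forall i, i < p -> bit i a = bit i b) -> a = b.
Proof.
elim: p a b => [|p IH] a b a_lt b_lt eq_bits.
  by move: a_lt b_lt; rewrite expn0 !ltnS !leqn0 => /eqP-> /eqP->.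
have eq_odd : odd a = odd b by have := eq_bits 0 erefl; rewrite /bit expn0 !divn1.
have eq_half : a %/ 2 = b %/ 2.
  apply: IH; try by rewrite ltn_divLR // -expnSr.
  by move=> i lt_ip; have := eq_bits i.+1 lt_ip; rewrite /bit expnS !divnMA.
by rewrite (divn_eq a 2) (divn_eq b 2) !modn2 eq_half eq_odd.
Qed.

Scheme dual_gen_dind := Induction for dual_gen Sort Prop.

Section Abomination.

Variables (n : nat) (e : seq (triple n)).
Hypotheses (n_gt0 : 0 < n) (enum_e : enumeration_of_Tn e).

Local Notation "x ≺ y" := (prec e x y) (at level 70).
Local Notation "x ≤ y" := (le e x y) (at level 70).

Lemma pset_ext (S T : pset n) : set_eq S T -> S = T.
Proof.
by move=> eqST; apply: functional_extensionality => x; apply: propositional_extensionality.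
Qed.

Lemma fresh_idx (a b c : idx n) : exists j : idx n, [/\ j != a, j != b & j != c].
Proof.
case: (pickP [predC [:: a; b; c]]) => [j | all_in].
  by rewrite !inE !negb_or => /and3P[]; exists j.
exfalso; have : #|idx n| <= 3.
  apply: leq_trans (card_size [:: a; b; c]); apply/subset_leq_card/subsetP => j _.
  by move/negbFE: (all_in j).
have : 2 ^ 2 <= 2 ^ n.+1 by rewrite leq_exp2l.
rewrite card_ord prednK ?expn_gt0 //; lia.
Qed.

Lemma triple_distinct m :
  [/\ k1_of e m != k2_of e m, k1_of e m != k3_of e m & k2_of e m != k3_of e m].
Proof.
case: enum_e => _ memT.
have [b [b0 _ _]] := fresh_idx ord0 ord0 ord0.
have [c [c0 cb _]] := fresh_idx ord0 b b.
have t_e : (ord0, b, c) \in e by rewrite memT /= !(eq_sym ord0) b0 c0 eq_sym cb.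
have size_e : 0 < size e by move: t_e; case: (e).
have : s_of e m \in e by rewrite mem_nth // ltn_pmod.
by rewrite memT /k1_of /k2_of /k3_of; case: (s_of e m) => [[k1 k2] k3] /and3P[].
Qed.

Definition depth (x : pt n) : nat :=
  match x with
  | Pbot => 0
  | Pc m _ => 3 * m
  | Pa m | Pb m | Pd m _ => 3 * m + 1
  | Pea m _ | Peb m _ => 3 * m + 2
  end.

Lemma prec_depth x y : x ≺ y -> depth x = (depth y).+1.
Proof. by case=> /= *; lia. Qed.

Lemma prec_neq_bot x y : x ≺ y -> x <> Pbot /\ y <> Pbot.
Proof. by case. Qed.

Lemma rt_neq_bot x y : clos_refl_trans _ (prec e) x y -> x <> Pbot -> y <> Pbot.
Proof. by elim=> [a b /prec_neq_bot[]|//|a b c _ IHab _ IHbc /IHab /IHbc]. Qed.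

Lemma rt_depth x y : clos_refl_trans _ (prec e) x y -> x = y \/ depth y < depth x.
Proof.
elim=> [a b /prec_depth->|a|a b c _ IHab _ IHbc]; [by right | by left |].
by case: IHab IHbc => [->|ab] [<-|bc]; [left | right | right | right; lia].
Qed.

Lemma le_bot x : Pbot ≤ x.
Proof. by left. Qed.

Lemma le_refl x : x ≤ x.
Proof. by right; apply: rt_refl. Qed.

Lemma prec_le x y : x ≺ y -> x ≤ y.
Proof. by right; apply: rt_step. Qed.

Lemma le_neq_bot x y : x <> Pbot -> x ≤ y -> y <> Pbot.
Proof. by move=> xb [//|/rt_neq_bot]; apply. Qed.

Lemma le_depth x y : x <> Pbot -> x ≤ y -> x = y \/ depth y < depth x.
Proof. by move=> xb [//|/rt_depth]. Qed.

Lemma le_trans x y z : x ≤ y -> y ≤ z -> x ≤ z.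
Proof.
case: (classic (x = Pbot)) => [-> _ _|xb xy]; first exact: le_bot.
case=> [yb|yz]; first by case: (le_neq_bot xb xy).
by case: xy => [//|xy]; right; apply: rt_trans xy yz.
Qed.

Lemma le_anti x y : x ≤ y -> y ≤ x -> x = y.
Proof.
case: (classic (x = Pbot)) => [->|xb] xy yx.
  by case: (classic (y = Pbot)) => [//|yb]; case: (le_neq_bot yb yx).
have yb := le_neq_bot xb xy.
by case: (le_depth xb xy) => // ?; case: (le_depth yb yx) => // ?; lia.
Qed.

Lemma le_cases x z : x <> Pbot -> x ≤ z -> x = z \/ exists2 y, x ≺ y & y ≤ z.
Proof.
move=> xb [//|xz]; case: (clos_rt_rt1n _ _ _ _ xz) => [|y w xy yw]; [by left | right].
by exists y => //; right; apply: clos_rt1n_rt.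
Qed.

Lemma le_prec x y : x <> Pbot -> x ≤ y -> depth x = (depth y).+1 -> x ≺ y.
Proof.
move=> xb xy dxy; case: (le_cases xb xy) => [xy_eq|[u xu uy]].
  by move: dxy; rewrite xy_eq; lia.
have [_ ub] := prec_neq_bot xu.
by case: (le_depth ub uy) => [<-//|]; have := prec_depth xu; lia.
Qed.

Definition all_idx : seq (idx n) := enum (idx n).
Definition other_idx (k : idx n) : seq (idx n) := List.filter (fun j => j != k) all_idx.

Lemma In_other_idx k j : In j (other_idx k) <-> j != k.
Proof. by rewrite filter_In; split=> [[]|jk]; [|split=> //; apply: In_enum]. Qed.

Definition covers (x : pt n) : seq (pt n) :=
  match x with
  | Pbot | Pc 0 _ => [::]
  | Pa m => [:: Pc m (k1_of e m); Pc m (k2_of e m)]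
  | Pb m => [:: Pc m (k1_of e m); Pc m (k3_of e m)]
  | Pc m.+1 k => (List.map (Pea m) (other_idx k) ++ List.map (Peb m) all_idx)%list
  | Pd m k => List.map (Pc m) (other_idx k)
  | Pea m k => Pa n m :: List.map (Pd m) (other_idx k)
  | Peb m k => Pb n m :: List.map (Pd m) (other_idx k)
  end.

Lemma covers_spec x y : In y (covers x) <-> x ≺ y.
Proof.
split.
- case: x => [|m|m|[|m] k|m k|m k|m k] //=.
  + by case=> [<-|[<-|[]]]; constructor; [left | right].
  + by case=> [<-|[<-|[]]]; constructor; [left | right].
  + by case/in_app_iff => /in_map_iff[j [<- jk]]; constructor; apply/In_other_idx.
  + by case/in_map_iff => j [<- /In_other_idx]; constructor.
  + by case=> [<-|/in_map_iff[j [<- /In_other_idx]]]; constructor.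
  + by case=> [<-|/in_map_iff[j [<- /In_other_idx]]]; constructor.
- case=> m k /=.
  + by case=> ->; [left | right; left].
  + by case=> ->; [left | right; left].
  + by move=> j jk; apply/in_app_iff; left; apply/in_map_iff; exists j; rewrite In_other_idx.
  + by move=> i; apply/in_app_iff; right; apply/in_map_iff; exists i; split=> //; apply: In_enum.
  + by move=> j jk; apply/in_map_iff; exists j; rewrite In_other_idx.
  + by left.
  + by move=> j jk; right; apply/in_map_iff; exists j; rewrite In_other_idx.
  + by left.
  + by move=> j jk; right; apply/in_map_iff; exists j; rewrite In_other_idx.
Qed.

Definition points_upto (d : nat) : seq (pt n) :=
  List.flat_map (fun m => Pa n m :: Pb n m ::
      List.flat_map (fun k => [:: Pc m k; Pd m k; Pea m k; Peb m k]) all_idx)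
    (List.seq 0 d.+1).

Lemma In_points_upto d x : x <> Pbot -> depth x <= d -> In x (points_upto d).
Proof.
case: x => [//|m|m|m k|m k|m k|m k] _ dx; apply/in_flat_map; exists m;
  (split; first by apply/in_seq; move: dx => /=; lia); rewrite /=; auto.
all: by right; right; apply/in_flat_map; exists k; split; [apply: In_enum | rewrite /=; tauto].
Qed.

Lemma two_covers x : x <> Pbot -> 0 < depth x ->
  exists y1 y2, [/\ x ≺ y1, x ≺ y2 & y1 <> y2].
Proof.
case: x => [//|m|m|[|m] k|m k|m k|m k] _ //= _.
- have [/eqP k12 _ _] := triple_distinct m.
  exists (Pc m (k1_of e m)), (Pc m (k2_of e m)).
  by split; [constructor; left | constructor; right | case].
- have [_ /eqP k13 _] := triple_distinct m.
  exists (Pc m (k1_of e m)), (Pc m (k3_of e m)).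
  by split; [constructor; left | constructor; right | case].
- have [j [jk _ _]] := fresh_idx k k k.
  by exists (Pea m j), (Peb m k); split=> //; constructor.
- have [j [jk _ _]] := fresh_idx k k k; have [j' [j'k j'j _]] := fresh_idx k j j.
  exists (Pc m j), (Pc m j').
  by split; [constructor | constructor | case=> /eqP; rewrite eq_sym (negbTE j'j)].
- have [j [jk _ _]] := fresh_idx k k k.
  by exists (Pa n m), (Pd m j); split=> //; constructor.
- have [j [jk _ _]] := fresh_idx k k k.
  by exists (Pb n m), (Pd m j); split=> //; constructor.
Qed.

Lemma exists_cover_neq x q : x <> Pbot -> 0 < depth x -> exists2 y, x ≺ y & y <> q.
Proof.
move=> xb dx; have [y1 [y2 [xy1 xy2 y12]]] := two_covers xb dx.
by case: (classic (y1 = q)) => [<- | ?]; [exists y2 => // /esym | exists y1].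
Qed.

Lemma le_at_depth d z : z <> Pbot -> d <= depth z ->
  exists w, [/\ z ≤ w, w <> Pbot & depth w = d].
Proof.
move Ek: (depth z) => k; elim: k z Ek => [|k IH] z dz zb dk.
  by exists z; split=> //; [apply: le_refl | lia].
case: (ltnP d k.+1) => [dk' | kd]; last by exists z; split=> //; [apply: le_refl | lia].
have [y zy _] := exists_cover_neq Pbot zb (ltac:(lia) : 0 < depth z).
have [_ yb] := prec_neq_bot zy.
have dy : depth y = k by have := prec_depth zy; lia.
have [w [yw wb dw]] := IH y dy yb dk'.
by exists w; split=> //; apply: le_trans (prec_le zy) yw.
Qed.

Lemma le_at_depth_neq z q : z <> Pbot -> depth q <= depth z -> z <> q ->
  exists w, [/\ z ≤ w, w <> Pbot, depth w = depth q & w <> q].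
Proof.
move=> zb; rewrite leq_eqVlt => /orP[/eqP dqz zq|dqz _].
  by exists z; split=> //; apply: le_refl.
have [w [zw wb dw]] := le_at_depth zb dqz.
have [y wy yq] := exists_cover_neq q wb (ltac:(lia) : 0 < depth w).
have [_ yb] := prec_neq_bot wy.
exists y; split=> //; first exact: le_trans zw (prec_le wy).
by have := prec_depth wy; lia.
Qed.

Lemma depth0_maximal w : w <> Pbot -> depth w = 0 -> exists k, w = Pc 0 k.
Proof. by case: w => [|m|m|m k|m k|m k|m k] //= _ dw; try lia; exists k; congr Pc; lia. Qed.

Lemma maximal_le k z : Pc 0 k ≤ z -> z = Pc 0 k.
Proof. by case/le_cases=> // [[y]]; inversion 1. Qed.

Lemma prec_prec_of_depth x y : x <> Pbot -> y <> Pbot -> depth x = (depth y).+2 ->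
  exists2 u, x ≺ u & u ≺ y.
Proof.
case: y => [//|m|m|m t|m t|m t|m t] _;
  case: x => [//|m'|m'|[|m'] k|m' k|m' k|m' k] _ //= dxy; try lia;
  first [have -> : m' = m by lia | have -> : m' = m.+1 by lia].
- have [j [jk _ _]] := fresh_idx k k k.
  by exists (Pea m j); constructor.
- by exists (Peb m k); constructor.
- have [j [jk jt _]] := fresh_idx k t t.
  by exists (Pd m j); constructor; rewrite // eq_sym.
- have [j [jk jt _]] := fresh_idx k t t.
  by exists (Pd m j); constructor; rewrite // eq_sym.
- have [j [jk jt _]] := fresh_idx k t t.
  by exists (Pea m j); constructor; rewrite // eq_sym.
- have [k12 _ _] := triple_distinct m.+1.
  case: (eqVneq (k1_of e m.+1) t) => [<- | k1t].
    by exists (Pc m.+1 (k2_of e m.+1)); constructor; [right |].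
  by exists (Pc m.+1 (k1_of e m.+1)); constructor; [left | rewrite eq_sym].
- have [_ k13 _] := triple_distinct m.+1.
  case: (eqVneq (k1_of e m.+1) t) => [<- | k1t].
    by exists (Pc m.+1 (k3_of e m.+1)); constructor; [right |].
  by exists (Pc m.+1 (k1_of e m.+1)); constructor; [left | rewrite eq_sym].
- have [j [jk jt _]] := fresh_idx k t t.
  by exists (Pc m.+1 j); constructor; rewrite // eq_sym.
- by exists (Pc m.+1 (k1_of e m.+1)); constructor; left.
- by exists (Pc m.+1 (k1_of e m.+1)); constructor; left.
- have [j [jk _ _]] := fresh_idx k k k.
  by exists (Pc m.+1 j); constructor.
Qed.

Lemma le_of_depth_gap x y : x <> Pbot -> y <> Pbot -> (depth y).+2 <= depth x -> x ≤ y.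
Proof.
move=> xb yb dxy; have [w [xw wb dw]] := le_at_depth xb dxy.
have [u wu uy] := prec_prec_of_depth wb yb dw.
exact: le_trans xw (le_trans (prec_le wu) (prec_le uy)).
Qed.

Ltac absurd_prec :=
  let H := fresh in
  move=> H; inversion H; subst;
  first [ by intuition congruence
        | match goal with h : is_true (?a != ?a) |- _ => by rewrite eqxx in h end ].

Lemma eq_of_covers x w : x <> Pbot -> w <> Pbot -> depth x = depth w -> 0 < depth x ->
  (forall u, x ≺ u <-> w ≺ u) -> x = w.
Proof.
case: x => [//|m|m|[|m] k|m k|m k|m k] _;
  case: w => [//|m'|m'|[|m'] k'|m' k'|m' k'|m' k'] _ //= dxw d_gt0 covx; try lia;
  (have Em : m' = m by lia); subst m'; try done.
- have [/eqP k12 _ /eqP k23] := triple_distinct m.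
  have /covx : Pa n m ≺ Pc m (k2_of e m) by constructor; right.
  by absurd_prec.
- have [j [/eqP j1 /eqP j2 jk]] := fresh_idx (k1_of e m) (k2_of e m) k'.
  have /covx : Pd m k' ≺ Pc m j by constructor.
  by absurd_prec.
- have [_ /eqP k13 /eqP k23] := triple_distinct m.
  have /covx : Pb n m ≺ Pc m (k3_of e m) by constructor; right.
  by absurd_prec.
- have [j [/eqP j1 /eqP j3 jk]] := fresh_idx (k1_of e m) (k3_of e m) k'.
  have /covx : Pd m k' ≺ Pc m j by constructor.
  by absurd_prec.
- case: (eqVneq k k') => [-> // | kk'].
  have /covx : Pc m.+1 k ≺ Pea m k' by constructor; rewrite eq_sym.
  by absurd_prec.
- have [j [/eqP j1 /eqP j2 jk]] := fresh_idx (k1_of e m) (k2_of e m) k.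
  have /covx : Pd m k ≺ Pc m j by constructor.
  by absurd_prec.
- have [j [/eqP j1 /eqP j3 jk]] := fresh_idx (k1_of e m) (k3_of e m) k.
  have /covx : Pd m k ≺ Pc m j by constructor.
  by absurd_prec.
- case: (eqVneq k k') => [-> // | kk'].
  have /covx : Pd m k ≺ Pc m k' by constructor; rewrite eq_sym.
  by absurd_prec.
- case: (eqVneq k k') => [-> // | kk'].
  have /covx : Pea m k ≺ Pd m k' by constructor; rewrite eq_sym.
  by absurd_prec.
- have /covx : Pea m k ≺ Pa n m by constructor.
  by absurd_prec.
- have /covx : Peb m k ≺ Pb n m by constructor.
  by absurd_prec.
- case: (eqVneq k k') => [-> // | kk'].
  have /covx : Peb m k ≺ Pd m k' by constructor; rewrite eq_sym.
  by absurd_prec.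
Qed.


Definition gen (i : 'I_n.+1) : pset n := fun z => exists2 k : idx n, z = Pc 0 k & bit i k.

Definition generated : pset n -> Prop := dual_gen e (fun T => exists i, T = gen i).

Lemma generated_gen i : generated (gen i).
Proof. by apply: dg_base; exists i. Qed.

Lemma generated_forall (A : Type) (l : seq A) (F : A -> pset n) :
  (forall a, In a l -> generated (F a)) -> generated (fun z => forall a, In a l -> F a z).
Proof.
elim: l => [|a l IH] genF.
  by rewrite (_ : (fun z => _) = @topS n); [exact: dg_top | apply: pset_ext].
rewrite (_ : (fun z => _) = meetS (F a) (fun z => forall b, In b l -> F b z)).
  by apply: dg_meet; [apply: genF; left | apply: IH => b bl; apply: genF; right].
apply: pset_ext => z; split=> [Fz | [Faz Flz] b [<- // | bl]]; last exact: Flz.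
by split=> [|b bl]; apply: Fz; [left | right].
Qed.

Lemma generated_exists (A : Type) (l : seq A) (F : A -> pset n) :
  (forall a, In a l -> generated (F a)) -> generated (fun z => exists a, In a l /\ F a z).
Proof.
elim: l => [|a l IH] genF.
  rewrite (_ : (fun z => _) = @botS n); first exact: dg_bot.
  by apply: pset_ext => z; split=> // [[? []]].
rewrite (_ : (fun z => _) = joinS (F a) (fun z => exists b, In b l /\ F b z)).
  by apply: dg_join; [apply: genF; left | apply: IH => b bl; apply: genF; right].
apply: pset_ext => z; split=> [[b [[<- | bl] Fbz]] | [Faz | [b [bl Fbz]]]].
- by left.
- by right; exists b.
- by exists a; split=> //; left.
- by exists b; split=> //; right.
Qed.

Lemma generated_forall_fin (I : finType) (F : I -> pset n) :
  (forall i, generated (F i)) -> generated (fun z => forall i, F i z).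
Proof.
move=> genF; rewrite (_ : (fun z => _) = fun z => forall i, In i (enum I) -> F i z).
  exact: generated_forall.
by apply: pset_ext => z; split=> Fz i => [_ | ]; apply: Fz; apply: In_enum.
Qed.

Lemma generated_imp_prop (P : Prop) (S : pset n) :
  (P -> generated S) -> generated (fun z => P -> S z).
Proof.
case: (classic P) => [p /(_ p) genS | np _].
  by rewrite (_ : (fun z => _) = S) //; apply: pset_ext => z; split=> [/(_ p) | Sz _].
by rewrite (_ : (fun z => _) = @topS n); [exact: dg_top | apply: pset_ext].
Qed.

Lemma generated_and_prop (P : Prop) (S : pset n) :
  (P -> generated S) -> generated (fun z => P /\ S z).
Proof.
case: (classic P) => [p /(_ p) genS | np _].
  by rewrite (_ : (fun z => _) = S) //; apply: pset_ext => z; split=> [[] | ].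
by rewrite (_ : (fun z => _) = @botS n); [exact: dg_bot | apply: pset_ext => z; split=> // [[]]].
Qed.

Definition up x : pset n := fun z => x ≤ z.
Definition strict_up x : pset n := fun z => exists2 y, x ≺ y & y ≤ z.
Definition nondown x : pset n := fun z => ~ z ≤ x.

Lemma impS_mp (S T : pset n) z : impS e S T z -> S z -> T z.
Proof. by move=> STz Sz; apply: NNPP => nTz; apply: STz; exists z; split=> //; apply: le_refl. Qed.

Lemma impS_upset (S T : pset n) : is_upset e (impS e S T).
Proof.
by move=> z z' zz' STz [v [z'v STv]]; apply: STz; exists v; split=> //; apply: le_trans zz' z'v.
Qed.

Lemma strict_up_le x z : strict_up x z -> x ≤ z.
Proof. by case=> y /prec_le; apply: le_trans. Qed.

Lemma nondownE x : x <> Pbot -> nondown x = impS e (up x) (strict_up x).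
Proof.
move=> xb; apply: pset_ext => z; split=> [zx [v [zv [xv nsv]]] | nxz zx].
  case: (le_cases xb xv) => [xv_eq | [y xy yv]]; last by apply: nsv; exists y.
  by apply: zx; rewrite xv_eq.
apply: nxz; exists x; split=> //; split; first exact: le_refl.
case=> y xy yx; have [_ yb] := prec_neq_bot xy.
by case: (le_depth yb yx) => [yx_eq | ]; have := prec_depth xy; [rewrite yx_eq; lia | lia].
Qed.

Lemma generated_strict_up x : (forall y, x ≺ y -> generated (up y)) -> generated (strict_up x).
Proof.
move=> gen_up; rewrite (_ : strict_up x = fun z => exists y, In y (covers x) /\ up y z).
  by apply: generated_exists => y /covers_spec; apply: gen_up.
apply: pset_ext => z.
by split=> [[y /covers_spec xy yz] | [y [/covers_spec xy yz]]]; [exists y | exists y].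
Qed.

Lemma generated_nondown x : x <> Pbot ->
  (forall y, y <> Pbot -> depth y <= depth x -> generated (up y)) -> generated (nondown x).
Proof.
move=> xb gen_up; rewrite nondownE //; apply: dg_imp; first exact: gen_up.
apply: generated_strict_up => y xy; have [_ yb] := prec_neq_bot xy.
by apply: gen_up => //; have := prec_depth xy; lia.
Qed.

Lemma gen_upset i : is_upset e (gen i).
Proof. by move=> z z' zz' [k zk bk]; rewrite zk in zz'; rewrite (maximal_le zz'); exists k. Qed.

Definition bit_literal (k : idx n) (i : 'I_n.+1) : pset n :=
  if bit i k then gen i else impS e (gen i) (@botS n).

Lemma bit_literal_upset k i : is_upset e (bit_literal k i).
Proof. by rewrite /bit_literal; case: ifP => _; [apply: gen_upset | apply: impS_upset]. Qed.

Lemma bit_literal_maximal k k' i : bit_literal k i (Pc 0 k') = (bit i k' = bit i k).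
Proof.
apply: propositional_extensionality; rewrite /bit_literal; case: ifP => bk.
  by split=> [[k'' [->] ->] | bk']; [| exists k'].
split=> [nk' | bk' [v [/maximal_le -> [[k'' [<-]]]]]]; last by rewrite bk'.
by apply/negbTE/negP => bk'; apply: impS_mp nk' _; exists k'.
Qed.

Lemma le_other_maximal k x : ~ Pc 0 k ≤ x -> exists2 k', k' != k & x ≤ Pc 0 k'.
Proof.
move=> nkx; case: (classic (x = Pbot)) => [-> | xb].
  by have [k' [k'k _ _]] := fresh_idx k k k; exists k' => //; apply: le_bot.
have xk : x <> Pc 0 k by move=> xk; apply: nkx; rewrite xk; apply: le_refl.
have [w [xw wb dw wk]] := le_at_depth_neq (q := Pc 0 k) xb (leq0n _) xk.
have [k' wk'] := depth0_maximal wb dw; rewrite wk' in xw wk.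
by exists k' => //; apply/eqP => k'k; apply: wk; rewrite k'k.
Qed.

Lemma up_maximalE k : up (Pc 0 k) = fun z => forall i, bit_literal k i z.
Proof.
apply: pset_ext => z; split=> [/maximal_le -> i | lit]; first by rewrite bit_literal_maximal.
apply: NNPP => nkz; have [k' k'k zk'] := le_other_maximal nkz.
have bits (i : 'I_n.+1) : bit i k' = bit i k.
  by rewrite -(bit_literal_maximal k k' i); apply: bit_literal_upset zk' (lit i).
have idx_lt (j : idx n) : j < 2 ^ n.+1 by rewrite (leq_trans (ltn_ord j)) // prednK ?expn_gt0.
move/eqP: k'k; apply; apply: val_inj; apply: (bit_inj (idx_lt k') (idx_lt k)) => i lt_in.
exact: (bits (Ordinal lt_in)).
Qed.

Lemma generated_up_maximal k : generated (up (Pc 0 k)).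
Proof.
rewrite up_maximalE; apply: generated_forall_fin => i; rewrite /bit_literal.
by case: ifP => _; [apply: generated_gen | apply: dg_imp; [apply: generated_gen | apply: dg_bot]].
Qed.

(* A Heyting term in the [up y] with [depth y < depth x]; it defines [up x] because a
   point of the depth of [x] satisfying it has the covers of [x] (see [eq_of_covers]). *)
Definition up_formula x : pset n := fun z =>
  (forall w, [/\ w <> Pbot, (depth w).+1 = depth x & ~ x ≺ w] -> nondown w z) /\
  (forall y, x ≺ y -> impS e (nondown y) (strict_up x) z).

Lemma up_formula_upset x : is_upset e (up_formula x).
Proof.
move=> z z' zz' [noncov cov]; split=> [w /noncov nzw z'w | y /cov STz].
  exact: nzw (le_trans zz' z'w).
exact: impS_upset zz' STz.
Qed.

Lemma up_formula_of_le x z : x <> Pbot -> x ≤ z -> up_formula x z.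
Proof.
move=> xb xz; split=> [w [wb dw nxw] zw | y xy [v [zv [nvy nsv]]]].
  by apply: nxw; apply: le_prec xb (le_trans xz zw) _.
case: (le_cases xb (le_trans xz zv)) => [xv | [y' xy' y'v]]; last by apply: nsv; exists y'.
by apply: nvy; rewrite -xv; apply: prec_le.
Qed.

Lemma up_formula_at_depth x w : x <> Pbot -> 0 < depth x -> up_formula x w ->
  w <> Pbot -> depth w = depth x -> w = x.
Proof.
move=> xb dx [noncov cov] wb dw; case: (classic (w = x)) => // wx.
have nsw : ~ strict_up x w.
  by move/strict_up_le => xw; case: (le_depth xb xw) => [/esym // | ]; lia.
symmetry; apply: eq_of_covers => // u; split=> [xu | wu].
  apply: le_prec wb _ _; last by rewrite dw; apply: prec_depth.
  by apply: NNPP => nwu; apply: nsw; apply: impS_mp (cov u xu) nwu.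
apply: NNPP => nxu; have [_ ub] := prec_neq_bot wu.
by apply: (noncov u) (prec_le wu); split=> //; rewrite -dw; apply/esym/prec_depth.
Qed.

Lemma up_formula_reach x z : x <> Pbot -> 0 < depth x -> up_formula x z -> ~ x ≤ z ->
  exists w, [/\ z ≤ w, w <> Pbot, depth w = depth x & w <> x].
Proof.
move=> xb dx [_ cov] nxz; case: (classic (z = Pbot)) => [-> | zb].
  (* [⊥] lies below everything: climb from any point deeper than [x]. *)
  have deep_neq : Pc (depth x) (ord0 : idx n) <> x.
    by move=> E; have := congr1 depth E; rewrite /=; lia.
  have [w [_ wb dw wx]] :=
    @le_at_depth_neq (Pc (depth x) ord0) x ltac:(by []) ltac:(rewrite /=; lia) deep_neq.
  by exists w; split=> //; apply: le_bot.
have [y xy _] := exists_cover_neq Pbot xb dx.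
have nsz : ~ strict_up x z by move/strict_up_le.
have zy : z ≤ y by apply: NNPP => nzy; apply: nsz; apply: impS_mp (cov y xy) nzy.
have dxz : depth x <= depth z.
  case: (le_depth zb zy) => [zy_eq | ]; last by have := prec_depth xy; lia.
  by case: nsz; exists y => //; rewrite zy_eq; apply: le_refl.
by apply: le_at_depth_neq => // zx; apply: nxz; rewrite zx; apply: le_refl.
Qed.

Lemma up_formulaE x : x <> Pbot -> 0 < depth x -> up x = up_formula x.
Proof.
move=> xb dx; apply: pset_ext => z; split; first exact: up_formula_of_le.
move=> fz; apply: NNPP => nxz.
have [w [zw wb dw wx]] := up_formula_reach xb dx fz nxz.
exact: wx (up_formula_at_depth xb dx (up_formula_upset zw fz) wb dw).
Qed.

Lemma generated_up_formula x : x <> Pbot ->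
  (forall y, y <> Pbot -> depth y < depth x -> generated (up y)) -> generated (up_formula x).
Proof.
move=> xb gen_up.
have gen_nondown y : y <> Pbot -> depth y < depth x -> generated (nondown y).
  by move=> yb dy; apply: generated_nondown => // w wb dw; apply: gen_up => //; lia.
apply: dg_meet.
  rewrite (_ : (fun z => _) = fun z => forall w, In w (points_upto (depth x)) ->
             [/\ w <> Pbot, (depth w).+1 = depth x & ~ x ≺ w] -> nondown w z).
    apply: generated_forall => w _; apply: generated_imp_prop => -[wb dw _].
    by apply: gen_nondown => //; lia.
  apply: pset_ext => z; split=> [noncov w _ | noncov w wP]; first exact: noncov.
  by case: (wP) => wb dw _; apply: noncov wP; apply: In_points_upto => //; lia.
rewrite (_ : (fun z => _) =
           fun z => forall y, In y (covers x) -> impS e (nondown y) (strict_up x) z).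
  apply: generated_forall => y /covers_spec xy; have [_ yb] := prec_neq_bot xy.
  apply: dg_imp; first by apply: gen_nondown => //; have := prec_depth xy; lia.
  apply: generated_strict_up => y' xy'; have [_ y'b] := prec_neq_bot xy'.
  by apply: gen_up => //; have := prec_depth xy'; lia.
by apply: pset_ext => z; split=> cov y /covers_spec; apply: cov.
Qed.

Lemma generated_up x : x <> Pbot -> generated (up x).
Proof.
move Ed: (depth x) => d; elim/ltn_ind: d x Ed => d IH x dx xb.
case: (posnP d) => [d0 | d_gt0].
  by have [k ->] := depth0_maximal xb (etrans dx d0); apply: generated_up_maximal.
rewrite up_formulaE ?dx //; apply: generated_up_formula => // y yb.
by rewrite dx => dy; apply: IH dy y erefl yb.
Qed.

Definition finite_pset (S : pset n) : Prop := exists l : seq (pt n), forall x, S x -> In x l.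

Lemma upset_bot_all S : is_upset e S -> S Pbot -> forall x, S x.
Proof. by move=> upS Sb x; apply: upS Sb; apply: le_bot. Qed.

Lemma clopen_upsetP S : is_upset e S -> clopen_upset e S <-> S Pbot \/ finite_pset S.
Proof.
move=> upS; split.
  by case=> [[_ [/NNPP Sb | [l Sl]]] _]; [left | right; exists l => x Sx; apply: Sl].
case: (classic (S Pbot)) => [Sb _ | nSb [// | [l Sl]]].
  have Sall := upset_bot_all upS Sb.
  by split=> //; split; [right; exists [::] => x; case | left].
by split=> //; split; [left | right; exists l => x /NNPP /Sl].
Qed.

Lemma finite_pset_depth S d : (forall x, S x -> x <> Pbot /\ depth x <= d) -> finite_pset S.
Proof. by move=> Sd; exists (points_upto d) => x /Sd[xb dx]; apply: In_points_upto. Qed.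

Lemma clopen_upset_up x : x <> Pbot -> clopen_upset e (up x).
Proof.
move=> xb; apply/clopen_upsetP; first by move=> z z' zz' xz; apply: le_trans xz zz'.
right; apply: (finite_pset_depth (d := depth x)) => z xz; split; first exact: le_neq_bot xz.
by case: (le_depth xb xz) => [<- | /ltnW].
Qed.

Lemma clopen_upset_gen i : clopen_upset e (gen i).
Proof.
apply/clopen_upsetP; first exact: gen_upset.
by right; apply: (finite_pset_depth (d := 0)) => z [k -> _].
Qed.

Lemma clopen_upset_meet S T :
  clopen_upset e S -> clopen_upset e T -> clopen_upset e (meetS S T).
Proof.
move=> cS cT; have [_ upS] := cS; have [_ upT] := cT.
apply/clopen_upsetP; first by move=> x y xy [Sx Tx]; split; [apply: upS xy Sx | apply: upT xy Tx].
case/(clopen_upsetP upS): cS => [Sb | [l Sl]]; last by right; exists l => x [/Sl].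
case/(clopen_upsetP upT): cT => [Tb | [l Tl]]; [by left | by right; exists l => x [_ /Tl]].
Qed.

Lemma clopen_upset_join S T :
  clopen_upset e S -> clopen_upset e T -> clopen_upset e (joinS S T).
Proof.
move=> cS cT; have [_ upS] := cS; have [_ upT] := cT.
apply/clopen_upsetP.
  by move=> x y xy [Sx | Tx]; [left; apply: upS xy Sx | right; apply: upT xy Tx].
case/(clopen_upsetP upS): cS => [Sb | [l1 Sl1]]; first by left; left.
case/(clopen_upsetP upT): cT => [Tb | [l2 Tl2]]; first by left; right.
by right; exists (l1 ++ l2)%list => x [/Sl1 | /Tl2] ?; apply/in_app_iff; [left | right].
Qed.

Lemma clopen_upset_imp S T :
  clopen_upset e S -> clopen_upset e T -> clopen_upset e (impS e S T).
Proof.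
move=> cS cT; have [_ upS] := cS; have [_ upT] := cT.
apply/(clopen_upsetP (@impS_upset S T)).
case: (classic (exists y, S y /\ ~ T y)) => [[y [Sy nTy]] | noST]; last first.
  by left => -[v [_ STv]]; apply: noST; exists v.
right; case: (classic (y = Pbot)) => [yb | yb].
  rewrite yb in Sy nTy; case/(clopen_upsetP upT): cT => [// | [l Tl]].
  by exists l => x STx; apply: Tl; apply: impS_mp STx (upset_bot_all upS Sy x).
apply: (finite_pset_depth (d := (depth y).+1)) => x STx.
have xb : x <> Pbot by move=> xb; apply: STx; exists y; split=> //; rewrite xb; apply: le_bot.
split=> //; rewrite leqNgt; apply/negP => dyx.
by apply: STx; exists y; split=> //; apply: le_of_depth_gap.
Qed.

Lemma clopen_upset_generated S : generated S -> clopen_upset e S.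
Proof.
elim=> {S} [S [i ->] | | | S T _ cS _ cT | S T _ cS _ cT | S T _ cS _ cT].
- exact: clopen_upset_gen.
- by apply/(clopen_upsetP (S := @botS n)) => //; right; exists [::].
- by apply/(clopen_upsetP (S := @topS n)) => //; left.
- exact: clopen_upset_meet.
- exact: clopen_upset_join.
- exact: clopen_upset_imp.
Qed.

Lemma generated_clopen_upset S : clopen_upset e S -> generated S.
Proof.
move=> cS; have [_ upS] := cS; case: (classic (S Pbot)) => [Sb | nSb].
  rewrite (_ : S = @topS n); first exact: dg_top.
  by apply: pset_ext => x; split=> // _; apply: upset_bot_all upS Sb x.
have [l Sl] : finite_pset S by case/(clopen_upsetP upS): cS.
rewrite (_ : S = fun z => exists x, In x l /\ (S x /\ up x z)).
  apply: generated_exists => x _; apply: generated_and_prop => Sx.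
  by apply: generated_up => xb; apply: nSb; rewrite -xb.
apply: pset_ext => z; split=> [Sz | [x [_ [Sx xz]]]]; last exact: upS xz Sx.
by exists z; split; [apply: Sl | split=> //; apply: le_refl].
Qed.

Lemma Xn_dual_infinite : dual_infinite e.
Proof.
case=> l cover.
have in_l m : In (up (Pa n m)) l.
  by have [S' [S'l /pset_ext ->]] := cover _ (@clopen_upset_up (Pa n m) ltac:(by [])).
have inj : Injective (fun m => up (Pa n m)).
  move=> i j /= eq_up.
  have le_ij : up (Pa n i) (Pa n j) by rewrite eq_up; apply: le_refl.
  have le_ji : up (Pa n j) (Pa n i) by rewrite -eq_up; apply: le_refl.
  by case: (le_anti le_ij le_ji).
have incl_l : incl (List.map (fun m => up (Pa n m)) (List.seq 0 (length l).+1)) l.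
  by move=> _ /in_map_iff[m [<- _]].
have := NoDup_incl_length (Injective_map_NoDup inj (seq_NoDup _ 0)) incl_l.
by rewrite length_map length_seq; lia.
Qed.

Lemma generated_val_inj (S T : {S | generated S}) : sval S = sval T -> S = T.
Proof. by apply: eq_sig_hprop => *; apply: proof_irrelevance. Qed.

Definition generated_subalgebra : HAlg := {|
  hcar := {S | generated S};
  hbot := exist generated (@botS n) (dg_bot _ _);
  htop := exist generated (@topS n) (dg_top _ _);
  hmeet S T := exist generated (meetS (sval S) (sval T)) (dg_meet (proj2_sig S) (proj2_sig T));
  hjoin S T := exist generated (joinS (sval S) (sval T)) (dg_join (proj2_sig S) (proj2_sig T));
  himp S T := exist generated (impS e (sval S) (sval T)) (dg_imp (proj2_sig S) (proj2_sig T)) |}.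

Lemma sval_heval (w : nat -> hcar generated_subalgebra) t :
  sval (heval w t) = deval e (fun i => sval (w i)) t.
Proof. by elim: t => //= s IHs u IHu; rewrite IHs IHu. Qed.

Lemma generated_subalgebra_in_variety : in_variety_dual e generated_subalgebra.
Proof.
move=> s t st w; apply: generated_val_inj; rewrite !sval_heval; apply: pset_ext.
by apply: st => i; apply: clopen_upset_generated; apply: svalP.
Qed.

Lemma generated_subalgebra_fg : finitely_generated generated_subalgebra.
Proof.
exists (List.map (fun i => exist generated (gen i) (generated_gen i)) (enum 'I_n.+1)).
case=> S gS; elim/dual_gen_dind: S / gS.
- move=> S [i Si]; apply: hg_base; apply/in_map_iff; exists i.
  by split; [apply: generated_val_inj; apply: esym | apply: In_enum].
- exact: hg_bot.
- exact: hg_top.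
- by move=> S T gS IHS gT IHT; apply: hg_meet IHS IHT.
- by move=> S T gS IHS gT IHT; apply: hg_join IHS IHT.
- by move=> S T gS IHS gT IHT; apply: hg_imp IHS IHT.
Qed.

Lemma generated_subalgebra_infinite : ~ finite_alg generated_subalgebra.
Proof.
case=> l all_l; apply: Xn_dual_infinite; exists (List.map sval l) => S cS.
exists S; split=> //; apply/in_map_iff.
by exists (exist generated S (generated_clopen_upset cS)).
Qed.

End Abomination.

Theorem mainTheorem7 (n : nat) (e : seq (triple n)) :
  2 <= n -> enumeration_of_Tn e ->
  dual_infinite e /\ dual_k_generated e n.+1 /\ ~ variety_dual_locally_finite e.
Proof.
move=> /ltnW n_gt0 enum_e; split; first exact: Xn_dual_infinite.
split.
  exists (@gen n); split; first exact: clopen_upset_gen.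
  by move=> S /(generated_clopen_upset n_gt0 enum_e) gS; exists S.
move=> locally_finite; apply: (generated_subalgebra_infinite n_gt0 enum_e).
by apply: locally_finite; [apply: generated_subalgebra_in_variety | apply: generated_subalgebra_fg].
Qed.
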